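(* Let $Q_{2^n}$ ($n\ge 3$) be the generalized quaternion group of order $2^n$. A non-identity element $g\in Q_{2^n}$ is an isolated vertex of the undeleted difference graph of $Q_{2^n}$ if and only if $g$ has order $2$.
   Context: $Q_{2^n}=\langle x,y\mid x^{2^{n-1}}=1,\ y^2=x^{2^{n-2}},\ y^{-1}xy=x^{-1}\rangle$. For a finite group $G$ with identity $e$: the intersection power graph $\mathcal{G}_I(G)$ has vertex set $G$, two distinct non-identity vertices $x,y$ being adjacent iff $\langle x\rangle\cap\langle y\rangle\neq\{e\}$, and $e$ being adjacent to every other vertex. The power graph $\mathcal{P}(G)$ has vertex set $G$, two distinct vertices being adjacent iff one is a power of the other. The undeleted difference graph of $G$ has vertex set $G$ and edge set $E(\mathcal{G}_I(G))\setminus E(\mathcal{P}(G))$. *)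

From mathcomp Require Import all_boot all_fingroup all_solvable.
Set Implicit Arguments. Unset Strict Implicit. Unset Printing Implicit Defensive.
Local Open Scope group_scope.

Definition int_pow_adj (gT : finGroupType) (x y : gT) : bool :=
  (x != y) && [|| x == 1, y == 1 | <[x]> :&: <[y]> != 1].

Definition pow_adj (gT : finGroupType) (x y : gT) : bool :=
  (x != y) && ((x \in <[y]>) || (y \in <[x]>)).

Definition diff_adj (gT : finGroupType) (x y : gT) : bool :=
  int_pow_adj x y && ~~ pow_adj x y.

Definition diff_isolated (gT : finGroupType) (g : gT) : Prop :=
  forall h : gT, ~~ diff_adj g h.

From mathcomp Require Import all_boot all_fingroup all_solvable.

Set Implicit Arguments.
Unset Strict Implicit.
Unset Printing Implicit Defensive.

Local Open Scope group_scope.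

(* Every nontrivial cyclic subgroup of the 2-group Q_(2^n) contains its unique
   involution z, so any two non-identity vertices are adjacent in the
   intersection power graph; hence g is isolated in the difference graph exactly
   when it is comparable with every h in the power graph. Being a power of every
   non-identity element, z is isolated. If #[g] >= 4, then either g lies in the
   maximal cyclic subgroup <x> and is incomparable with an element y of order 4
   outside <x>, or g lies outside <x>, hence has order 4 <= #[x], and is
   incomparable with x. *)

Section DifferenceGraph.

Variable gT : finGroupType.
Implicit Types g h x y z : gT.

Lemma mem_cycle_swap x y : x \in <[y]> -> #[y] <= #[x] -> y \in <[x]>.
Proof.
move=> yx le_yx; have sxy : <[x]> \subset <[y]> by rewrite cycle_subG.
have /eqP -> : <[x]> == <[y]> by rewrite eqEcard sxy -!orderE.
exact: cycle_id.
Qed.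

Lemma pelt_sqr_leq_order (p : nat) g :
  p.-elt g -> g != 1 -> #[g] != p -> p ^ 2 <= #[g].
Proof.
move=> /p_natP[k og]; rewrite -order_eq1 og.
case: k {og} => [|[|k]]; rewrite ?expn1 ?eqxx //= => _ ntp.
by rewrite leq_pexp2l // lt0n; apply: contra ntp => /eqP->; rewrite exp0n.
Qed.

Lemma mem_cycle_uniq_order (p : nat) (G : {group gT}) z h :
    p.-group G -> (forall u, u \in G -> #[u] = p -> u = z) ->
  h \in G -> h != 1 -> z \in <[h]>.
Proof.
move=> pG uniq_z Gh nth.
have sHG : <[h]> \subset G by rewrite cycle_subG.
have ntH : <[h]> != 1 by rewrite cycle_eq1.
have [p_pr p_dvd _] := pgroup_pdiv (pgroupS sHG pG) ntH.
have [u Hu ou] := Cauchy p_pr p_dvd.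
by rewrite -(uniq_z u) // (subsetP sHG).
Qed.

Lemma diff_adjE x y :
  diff_adj x y =
    [&& [|| x == 1, y == 1 | <[x]> :&: <[y]> != 1],
        x \notin <[y]> & y \notin <[x]>].
Proof.
rewrite /diff_adj /int_pow_adj /pow_adj negb_and negbK negb_or.
by case: eqVneq => [->|_]; rewrite ?cycle_id ?andbF.
Qed.

Section CommonElement.

Variable z : gT.
Hypotheses (ntz : z != 1) (z_in_cycles : forall h, h != 1 -> z \in <[h]>).

Lemma diff_adj_common x y :
  diff_adj x y = (x \notin <[y]>) && (y \notin <[x]>).
Proof.
rewrite diff_adjE; case: eqP => [_|/eqP ntx]; first by rewrite orTb.
case: eqP => [_|/eqP nty]; first by rewrite orbT.
suff -> : <[x]> :&: <[y]> != 1 by [].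
apply/negP => /eqP cap1.
have : z \in <[x]> :&: <[y]> by rewrite inE !z_in_cycles.
by rewrite cap1 inE (negbTE ntz).
Qed.

Lemma diff_isolatedP g :
  diff_isolated g <-> (forall h, (g \in <[h]>) || (h \in <[g]>)).
Proof.
by split=> iso_g h; have := iso_g h; rewrite diff_adj_common negb_and !negbK.
Qed.

End CommonElement.

End DifferenceGraph.

Section Quaternion.

Variables (n : nat) (x y : 'Q_(2 ^ n)).
Hypotheses (n_gt2 : 2 < n) (genQ : extremal_generators 'Q_(2 ^ n) 2 n (x, y)).
Hypothesis oy : #[y] = 4.

Let z := x ^+ (2 ^ n.-2).

Let quaternion_facts := quaternion_structure n_gt2 genQ (isog_refl _).

Lemma quaternion_involution_order : #[z] = 2.
Proof.
by have [_ _ [ZQ oZ _ _ _] _ _] := quaternion_facts; rewrite orderE -ZQ.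
Qed.

Lemma quaternion_uniq_involution (u : 'Q_(2 ^ n)) : #[u] = 2 -> u = z.
Proof. by have [_ _ [_ _ uniq_z _ _] _ _] := quaternion_facts; apply: uniq_z. Qed.

Lemma quaternion_pgroup : 2.-group 'Q_(2 ^ n).
Proof. by have [oQ _ _ _] := genQ; rewrite /pgroup oQ pnatX. Qed.

Lemma quaternion_involution_in_cycles (h : 'Q_(2 ^ n)) : h != 1 -> z \in <[h]>.
Proof.
apply: (mem_cycle_uniq_order quaternion_pgroup) => [u _|]; last exact: in_setT.
exact: quaternion_uniq_involution.
Qed.

Lemma quaternion_incomparable (g : 'Q_(2 ^ n)) :
  g != 1 -> #[g] != 2 -> exists h, (g \notin <[h]>) && (h \notin <[g]>).
Proof.
move=> ntg og2; have [_ _ ox /setDP[_ notXy]] := genQ.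
have [[_ oX _] _ _ _ _] := quaternion_facts.
have ox4 : 4 <= #[x].
  by rewrite ox -[4]/(2 ^ 2)%N leq_exp2l // ltn_predRL.
have [Xg | notXg] := boolP (g \in <[x]>).
  have sgX : <[g]> \subset <[x]> by rewrite cycle_subG.
  have og4 : (2 ^ 2)%N <= #[g].
    exact: pelt_sqr_leq_order (mem_p_elt quaternion_pgroup (in_setT g)) ntg og2.
  have notGy : y \notin <[g]> by apply: contra notXy => /(subsetP sgX).
  exists y; rewrite notGy andbT; apply: contra notGy => gy.
  by apply: mem_cycle_swap; rewrite ?oy.
have og : #[g] = 4 by rewrite oX // !inE notXg.
exists x; rewrite notXg /=; apply: contra notXg => xg.
by apply: mem_cycle_swap; rewrite ?og.
Qed.

End Quaternion.

Theorem lemma5p3 (n : nat) (hn : 3 <= n) (g : 'Q_(2 ^ n)) (hg : g != 1) :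
  diff_isolated g <-> #[g] = 2.
Proof.
have [[x y] genQ [oy _ _]] := generators_quaternion hn (isog_refl _).
have ntz : x ^+ (2 ^ n.-2) != 1.
  by rewrite -order_eq1 (quaternion_involution_order hn genQ).
apply: iff_trans (diff_isolatedP ntz (quaternion_involution_in_cycles hn genQ) g) _.
split=> [comparable | og2 h].
  apply/eqP/contraT => og2.
  have [h /andP[notGh notHg]] := quaternion_incomparable hn genQ oy hg og2.
  by move: (comparable h); rewrite (negbTE notGh) (negbTE notHg).
have [-> | nth] := eqVneq h 1; first by rewrite group1 orbT.
by rewrite (quaternion_uniq_involution hn genQ og2)
  (quaternion_involution_in_cycles hn genQ).
Qed.
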